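(* Let $\Phi$ and $\Xi$ be subsets of Euclidean spaces, let $H:\Phi\times\Xi\to\mathbb{R}$ be a deterministic function and, for each $n$, let $H_n:\Phi\times\Xi\to\mathbb{R}$ be a random function (built from a sample of size $n$) with $H_n(\phi,\xi)\to H(\phi,\xi)$ in probability for every $(\phi,\xi)$. Define $$\hat\phi=\arg\inf_{\phi\in\Phi}\sup_{\xi\in\Xi}H_n(\phi,\xi),\qquad \phi^*=\arg\inf_{\phi\in\Phi}\sup_{\xi\in\Xi}H(\phi,\xi),$$ and for $\phi\in\Phi$ write $\xi(\phi)=\arg\sup_{t}H(\phi,t)$, $\xi_n(\phi)=\arg\sup_tH_n(\phi,t)$. Assume: (A1) the estimate $\hat\phi$ exists (not necessarily uniquely); (A2) $\sup_{\xi,\phi}|H_n(\phi,\xi)-H(\phi,\xi)|\to0$ in probability; (A3) for every $\phi$, for every $\varepsilon>0$ and every $\tilde\xi$ with $\|\tilde\xi-\xi(\phi)\|>\varepsilon$, there exists $\eta>0$ with $H(\phi,\xi(\phi))-H(\phi,\tilde\xi)>\eta$; (A4) the infimum of $\phi\mapsto H(\phi,\xi(\phi))$ is unique and isolated: for every $\varepsilon>0$ and every $\phi$ with $\|\phi-\phi^*\|>\varepsilon$, there exists $\eta>0$ with $H(\phi,\xi(\phi))-H(\phi^*,\xi(\phi^* ))>\eta$; (A5) for every $\phi\in\Phi$, the function $\xi\mapsto H(\phi,\xi)$ is continuous. Then $\hat\phi\to\phi^*$ in probability. *)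

From HB Require Import structures.
From mathcomp Require Import all_boot all_order all_algebra.
From mathcomp Require Import all_classical all_reals all_analysis.
Set Implicit Arguments. Unset Strict Implicit. Unset Printing Implicit Defensive.
Import Order.TTheory GRing.Theory Num.Theory.
Import numFieldNormedType.Exports.
Local Open Scope classical_set_scope.
Local Open Scope ring_scope.

Definition enorm (R : realType) (k : nat) (v : 'rV[R]_k) : R :=
  Num.sqrt (\sum_(i < k) v ord0 i ^+ 2).

Definition supE (R : realType) (U : Type) (A : set U) (f : U -> R) : \bar R :=
  ereal_sup [set (f x)%:E | x in A].

(* Outer probability of an arbitrary (possibly non-measurable) event:
   P^*(E) = inf { P(A) | A measurable, E `<=` A }. *)
Definition Pout (d : measure_display) (T : measurableType d) (R : realType)
  (P : probability T R) (E : set T) : \bar R :=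
  ereal_inf [set P A | A in [set A | measurable A /\ E `<=` A]].

Definition vanishing_prob (d : measure_display) (T : measurableType d)
  (R : realType) (P : probability T R) (E : nat -> set T) : Prop :=
  (fun n => Pout P (E n)) @ \oo --> 0%E.

From HB Require Import structures.
From mathcomp Require Import lra.
From mathcomp Require Import all_boot all_order all_algebra.
From mathcomp Require Import all_classical all_reals all_analysis.
Import Order.TTheory GRing.Theory Num.Theory.
Import numFieldNormedType.Exports.
Local Open Scope classical_set_scope.
Local Open Scope ring_scope.

Set Implicit Arguments.
Unset Strict Implicit.
Unset Printing Implicit Defensive.

(* If the empirical objective H_n is uniformly within eta/2 of H, then the
   value M(phi) = H(phi, xi(phi)) at the empirical minimax point phihat is
   within eta of the minimal value M(phistar): sup H_n(phihat, .) is squeezed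
   between M(phihat) - eta/2 and sup H_n(phistar, .) <= M(phistar) + eta/2.
   By the isolation assumption (A4), phihat is therefore eps-close to phistar
   outside the event where the uniform error exceeds eta/2, whose outer
   probability vanishes by (A2). *)

Section OuterProbability.
Variables (d : measure_display) (T : measurableType d) (R : realType).
Variable P : probability T R.

Lemma Pout_ge0 (E : set T) : (0 <= Pout P E)%E.
Proof. by apply: le_ereal_inf_tmp => _ [A [mA _] <-]; exact: measure_ge0. Qed.

Lemma le_Pout (E F : set T) : E `<=` F -> (Pout P E <= Pout P F)%E.
Proof.
move=> EF; apply: ereal_inf_le_tmp => _ [A [mA FA] <-].
by exists A => //; split => //; exact: subset_trans FA.
Qed.

Lemma vanishing_prob_sub (E F : nat -> set T) :
  (forall n, E n `<=` F n) -> vanishing_prob P F -> vanishing_prob P E.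
Proof.
move=> EF; apply: (squeeze_cvge _ (cvg_cst 0%E)).
by near=> n; rewrite Pout_ge0 le_Pout.
Unshelve. all: by end_near.
Qed.

End OuterProbability.

Section UniformPerturbation.
Variables (R : realType) (U V : Type).
Variables (Phi : set U) (Xi : set V) (H G : U -> V -> R) (xi : U -> V).
Variable delta : R.
Hypothesis Hxi : forall phi, Phi phi ->
  Xi (xi phi) /\ forall t, Xi t -> H phi t <= H phi (xi phi).
Hypothesis HG : forall phi t, Phi phi -> Xi t -> `|G phi t - H phi t| <= delta.

Lemma supE_perturb_ge phi : Phi phi ->
  ((H phi (xi phi) - delta)%:E <= supE Xi (G phi))%E.
Proof.
move=> Phi_phi; have [Xi_xi _] := Hxi Phi_phi.
apply: le_ereal_sup_tmp; exists (G phi (xi phi))%:E; first by exists (xi phi).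
by rewrite lee_fin; have := HG Phi_phi Xi_xi; rewrite ler_norml => /andP[+ _]; lra.
Qed.

Lemma supE_perturb_le phi : Phi phi ->
  (supE Xi (G phi) <= (H phi (xi phi) + delta)%:E)%E.
Proof.
move=> Phi_phi; have [_ xi_max] := Hxi Phi_phi.
apply: ge_ereal_sup => _ [t Xi_t <-]; rewrite lee_fin.
have := HG Phi_phi Xi_t; rewrite ler_norml => /andP[_].
by have := xi_max _ Xi_t; lra.
Qed.

Lemma minimax_perturb_value phi0 phi1 : Phi phi0 -> Phi phi1 ->
  (supE Xi (G phi0) <= supE Xi (G phi1))%E ->
  H phi0 (xi phi0) - H phi1 (xi phi1) <= delta + delta.
Proof.
move=> Phi0 Phi1 le01.
have := le_trans (supE_perturb_ge Phi0) (le_trans le01 (supE_perturb_le Phi1)).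
by rewrite lee_fin; lra.
Qed.

End UniformPerturbation.

Theorem theorem1
  (R : realType) (d : measure_display) (T : measurableType d)
  (P : probability T R) (p q : nat)
  (Phi : set 'rV[R]_p) (Xi : set 'rV[R]_q)
  (H : 'rV[R]_p -> 'rV[R]_q -> R)
  (Hn : nat -> T -> 'rV[R]_p -> 'rV[R]_q -> R)
  (phihat : nat -> T -> 'rV[R]_p) (phistar : 'rV[R]_p)
  (xi : 'rV[R]_p -> 'rV[R]_q)
  (* pointwise convergence in probability H_n(phi,xi) -> H(phi,xi) *)
  (Hpw : forall phi xx, Phi phi -> Xi xx -> forall eps : R, 0 < eps ->
     vanishing_prob P (fun n => [set w | eps < `|Hn n w phi xx - H phi xx|]))
  (* xi(phi) = arg sup_{t in Xi} H(phi, t) *)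
  (Hxi : forall phi, Phi phi ->
     Xi (xi phi) /\ forall t, Xi t -> H phi t <= H phi (xi phi))
  (* phistar = arg inf_{phi in Phi} sup_{xi in Xi} H(phi, xi) *)
  (Hstar : Phi phistar /\
     forall phi, Phi phi -> (supE Xi (H phistar) <= supE Xi (H phi))%E)
  (* (A1) phihat = arg inf_{phi in Phi} sup_{xi in Xi} H_n(phi, xi) exists *)
  (A1 : forall n w, Phi (phihat n w) /\
     forall phi, Phi phi ->
       (supE Xi (Hn n w (phihat n w)) <= supE Xi (Hn n w phi))%E)
  (* (A2) uniform convergence in probability *)
  (A2 : forall eps : R, 0 < eps ->
     vanishing_prob P (fun n => [set w | (eps%:E <
        ereal_sup [set (`|Hn n w z.1 z.2 - H z.1 z.2|)%:E | z in Phi `*` Xi])%E]))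
  (* (A3) *)
  (A3 : forall phi, Phi phi -> forall eps : R, 0 < eps ->
     forall t, Xi t -> eps < enorm (t - xi phi) ->
     exists2 eta : R, 0 < eta & eta < H phi (xi phi) - H phi t)
  (* (A4) the infimum of phi |-> H(phi, xi(phi)) is unique and isolated *)
  (A4 : forall eps : R, 0 < eps -> exists2 eta : R, 0 < eta &
     forall phi, Phi phi -> eps < enorm (phi - phistar) ->
       eta < H phi (xi phi) - H phistar (xi phistar))
  (* (A5) continuity in xi *)
  (A5 : forall phi, Phi phi -> {within Xi, continuous (H phi)}) :
  forall eps : R, 0 < eps ->
    vanishing_prob P (fun n => [set w | eps < enorm (phihat n w - phistar)]).
Proof.
move=> eps eps0; have [eta eta0 isolated] := A4 eps eps0.
apply: (vanishing_prob_sub _ (A2 (eta / 2) _)); last by rewrite divr_gt0.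
move=> n w /= far; rewrite ltNge; apply/negP => uniform.
have close phi t : Phi phi -> Xi t -> `|Hn n w phi t - H phi t| <= eta / 2.
  move=> Phi_phi Xi_t; rewrite -lee_fin; apply: le_trans uniform.
  by apply: ereal_sup_ubound; exists (phi, t).
have [Phi_hat hat_min] := A1 n w.
have := minimax_perturb_value Hxi close Phi_hat Hstar.1 (hat_min _ Hstar.1).
by have := isolated _ Phi_hat far; lra.
Qed.
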